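(* Suppose $\gamma$ is a geodesic from $(x_1,y_1)$ to $(x_2,y_2)$ with $x_2\ge x_1$. Then there exists a semi-directed, non-self-intersecting geodesic $\gamma'$ from $(x_1,y_1)$ to $(x_2,y_2)$.
   Context: Model: Let $G$ be a probability measure on $[0,\infty)$. In $\mathbb Z^2$, every vertical edge receives weight $1$ and every horizontal edge (joining $(x,y)$ and $(x+1,y)$) receives a non-negative random weight with law $G$ (independently). A path is a sequence $(z_0,z_1,\dots)$ of points of $\mathbb Z^2$ with $z_k,z_{k+1}$ joined by an edge; its passage time $T(p)$ is the sum of weights over edges $(z_k,z_{k+1})$ of $p$; $T(u,w)=\inf_pT(p)$ over paths from $u$ to $w$, and a path from $u$ to $w$ attaining the infimum is a geodesic. A path is semi-directed if $z_{k+1}-z_k\in\{(1,0),(0,1),(0,-1)\}$ for all $k$; it is non-self-intersecting if it visits no point twice. *)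

From Stdlib Require Import Reals ZArith List.
Open Scope R_scope.

Definition point := (Z * Z)%type.

(* A weight configuration: [w (x,y)] is the weight of the horizontal edge
   joining (x,y) and (x+1,y).  Vertical edges have weight 1. *)
Definition hweights := point -> R.

Definition adjacent (z z' : point) : Prop :=
  (Z.abs (fst z - fst z') + Z.abs (snd z - snd z'))%Z = 1%Z.

(* weight of the edge {z, z'} (only meaningful when adjacent) *)
Definition edge_weight (w : hweights) (z z' : point) : R :=
  if Z.eq_dec (fst z) (fst z') then 1
  else if Z.eq_dec (fst z + 1) (fst z') then w z
  else w z'.

Fixpoint consecutive (P : point -> point -> Prop) (p : list point) : Prop :=
  match p with
  | z :: ((z' :: _) as rest) => P z z' /\ consecutive P rest
  | _ => True
  end.

Definition is_path (p : list point) : Prop := p <> nil /\ consecutive adjacent p.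

Definition path_from_to (p : list point) (u v : point) : Prop :=
  is_path p /\ hd_error p = Some u /\ last p u = v.

Fixpoint passage_time (w : hweights) (p : list point) : R :=
  match p with
  | z :: ((z' :: _) as rest) => edge_weight w z z' + passage_time w rest
  | _ => 0
  end.

Definition geodesic (w : hweights) (p : list point) (u v : point) : Prop :=
  path_from_to p u v /\
  forall q, path_from_to q u v -> passage_time w p <= passage_time w q.

Definition sd_step (z z' : point) : Prop :=
  (fst z' = fst z + 1 /\ snd z' = snd z)%Z \/
  (fst z' = fst z /\ snd z' = snd z + 1)%Z \/
  (fst z' = fst z /\ snd z' = snd z - 1)%Z.

Definition semi_directed (p : list point) : Prop := consecutive sd_step p.

Definition non_self_intersecting (p : list point) : Prop := NoDup p.

From Stdlib Require Import Reals ZArith List Lia Lra ListDec Wf_nat.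
Import ListNotations.
Open Scope R_scope.

(* Since every edge costs at least its vertical displacement, a path between two
   points of the same column costs at least their vertical distance, so it may be
   replaced by the straight vertical segment.  Cutting a path from column x1 at
   its first step from column x1 to x1 + 1 and straightening the part before it,
   induction on x2 - x1 yields a semi-directed path that is no more expensive.
   Erasing loops keeps it semi-directed and, the weights being non-negative,
   does not increase its passage time; a path no more expensive than a geodesic
   is a geodesic. *)

Lemma last_cons_default (z : point) (l : list point) d d' : last (z :: l) d = last (z :: l) d'.
Proof.
  revert z; induction l as [|z' l IH]; intros z; [reflexivity|].
  exact (IH z').
Qed.

Lemma last_app_cons (l1 l2 : list point) z d : last (l1 ++ z :: l2) d = last (z :: l2) z.
Proof.
  induction l1 as [|a l1 IH]; [apply last_cons_default|].
  rewrite <- IH. now destruct l1.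
Qed.

Lemma consecutive_app_cons (P : point -> point -> Prop) l1 z l2 :
  consecutive P (l1 ++ z :: l2) <-> consecutive P (l1 ++ [z]) /\ consecutive P (z :: l2).
Proof.
  induction l1 as [|a l1 IH]; simpl.
  - tauto.
  - destruct l1 as [|b l1]; simpl in *; tauto.
Qed.

Lemma consecutive_cons (P : point -> point -> Prop) z z' q :
  hd_error q = Some z' -> consecutive P (z :: q) <-> P z z' /\ consecutive P q.
Proof. destruct q as [|? q]; [discriminate|]. now intros [= ->]. Qed.

Lemma consecutive_erase_loop (P : point -> point -> Prop) l1 a l2 l3 :
  consecutive P (l1 ++ a :: l2 ++ a :: l3) -> consecutive P (l1 ++ a :: l3).
Proof.
  rewrite (consecutive_app_cons P l1 a (l2 ++ a :: l3)), (consecutive_app_cons P l1 a l3).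
  change (a :: l2 ++ a :: l3) with ((a :: l2) ++ a :: l3).
  rewrite (consecutive_app_cons P (a :: l2) a l3). tauto.
Qed.

Lemma path_from_to_app_cons l1 z l2 u v :
  path_from_to (l1 ++ z :: l2) u v <->
  path_from_to (l1 ++ [z]) u z /\ path_from_to (z :: l2) z v.
Proof.
  unfold path_from_to, is_path.
  rewrite consecutive_app_cons, last_app_cons, last_last.
  replace (hd_error (l1 ++ [z])) with (hd_error (l1 ++ z :: l2)) by (destruct l1; reflexivity).
  assert (l1 ++ [z] <> []) by (destruct l1; discriminate).
  assert (l1 ++ z :: l2 <> []) by (destruct l1; discriminate).
  assert (z :: l2 <> []) by discriminate.
  intuition.
Qed.

Lemma path_from_to_cons z z' q u v :
  hd_error q = Some z' ->
  path_from_to (z :: q) u v <-> u = z /\ adjacent z z' /\ path_from_to q z' v.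
Proof.
  destruct q as [|? q]; [discriminate|]. intros [= ->].
  unfold path_from_to, is_path. cbn [consecutive hd_error].
  change (last (z :: z' :: q) u) with (last (z' :: q) u).
  rewrite (last_cons_default z' q u z').
  split.
  - intros [[_ [Hadj Hc]] [[= ->] Hl]]. repeat split; auto; discriminate.
  - intros (-> & Hadj & [_ Hc] & _ & Hl). repeat split; auto; discriminate.
Qed.

Lemma path_from_to_erase_loop l1 a l2 l3 u v :
  path_from_to (l1 ++ a :: l2 ++ a :: l3) u v -> path_from_to (l1 ++ a :: l3) u v.
Proof.
  rewrite (path_from_to_app_cons l1 a (l2 ++ a :: l3)), (path_from_to_app_cons l1 a l3).
  change (a :: l2 ++ a :: l3) with ((a :: l2) ++ a :: l3).
  rewrite (path_from_to_app_cons (a :: l2) a l3). tauto.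
Qed.

Lemma path_from_to_snoc p u z : path_from_to p u z -> exists p0, p = p0 ++ [z].
Proof.
  intros [[Hne _] [_ Hl]]. exists (removelast p).
  rewrite <- Hl. exact (app_removelast_last u Hne).
Qed.

Lemma path_right_crossing x p u v :
  path_from_to p u v -> (fst u <= x < fst v)%Z ->
  exists A a B, p = A ++ (x, a) :: ((x + 1)%Z, a) :: B.
Proof.
  revert u; induction p as [|z q IH]; intros u Hp Hx.
  { destruct Hp as [[Hne _] _]. easy. }
  destruct q as [|z' r].
  { destruct Hp as [_ [[= ->] <-]]. cbn in Hx. lia. }
  apply path_from_to_cons with (z' := z') in Hp as (-> & Hadj & Hq); [|reflexivity].
  destruct (Z_le_dec (fst z') x) as [Hz'|Hz'].
  - destruct (IH z' Hq ltac:(lia)) as (A & a & B & ->).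
    now exists (z :: A), a, B.
  - exists [], (snd z), r. unfold adjacent in Hadj.
    destruct z as [x0 y0], z' as [x1 y1]; cbn in *.
    do 3 f_equal; lia.
Qed.

Lemma point_eq_decidable : decidable_eq point.
Proof.
  intros [x y] [x' y'].
  destruct (Z.eq_dec x x'), (Z.eq_dec y y'); [left; congruence | right; congruence ..].
Qed.

Lemma edge_weight_vertical w x y y' : edge_weight w (x, y) (x, y') = 1.
Proof. unfold edge_weight; cbn. destruct Z.eq_dec; congruence. Qed.

Lemma edge_weight_right w x y : edge_weight w (x, y) ((x + 1)%Z, y) = w (x, y).
Proof.
  unfold edge_weight; cbn. destruct Z.eq_dec; [lia|]. destruct Z.eq_dec; congruence.
Qed.

Lemma passage_time_app_cons w l1 z l2 :
  passage_time w (l1 ++ z :: l2) = passage_time w (l1 ++ [z]) + passage_time w (z :: l2).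
Proof.
  induction l1 as [|a l1 IH]; simpl.
  - ring.
  - destruct l1 as [|b l1]; simpl in *; rewrite IH; ring.
Qed.

Lemma passage_time_cons w z z' q :
  hd_error q = Some z' -> passage_time w (z :: q) = edge_weight w z z' + passage_time w q.
Proof. destruct q as [|? q]; [discriminate|]. now intros [= ->]. Qed.

Section NonnegativeWeights.

Variable w : hweights.
Hypothesis w_nonneg : forall z, 0 <= w z.

Lemma passage_time_nonneg p : 0 <= passage_time w p.
Proof.
  induction p as [|a [|b p] IH]; cbn; try lra.
  enough (0 <= edge_weight w a b) by (cbn in IH; lra).
  unfold edge_weight. repeat destruct Z.eq_dec; auto; lra.
Qed.

Lemma passage_time_erase_loop l1 a l2 l3 :
  passage_time w (l1 ++ a :: l3) <= passage_time w (l1 ++ a :: l2 ++ a :: l3).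
Proof.
  rewrite (passage_time_app_cons w l1 a (l2 ++ a :: l3)), (passage_time_app_cons w l1 a l3).
  change (a :: l2 ++ a :: l3) with ((a :: l2) ++ a :: l3).
  rewrite (passage_time_app_cons w (a :: l2) a l3). pose proof (passage_time_nonneg ((a :: l2) ++ [a])). lra.
Qed.

Lemma vertical_displacement_le_edge_weight z z' :
  adjacent z z' -> IZR (Z.abs (snd z - snd z')) <= edge_weight w z z'.
Proof.
  unfold adjacent, edge_weight. intros Hadj.
  destruct Z.eq_dec.
  - replace (Z.abs (snd z - snd z')) with 1%Z by lia. lra.
  - replace (Z.abs (snd z - snd z')) with 0%Z by lia.
    destruct Z.eq_dec; apply w_nonneg.
Qed.

Lemma vertical_displacement_le_passage_time p u v :
  path_from_to p u v -> IZR (Z.abs (snd u - snd v)) <= passage_time w p.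
Proof.
  revert u; induction p as [|z [|z' r] IH]; intros u Hp.
  - destruct Hp as [[Hne _] _]. easy.
  - destruct Hp as [_ [[= ->] <-]]. rewrite Z.sub_diag. cbn. lra.
  - apply path_from_to_cons with (z' := z') in Hp as (-> & Hadj & Hq); [|reflexivity].
    rewrite (passage_time_cons _ _ z') by reflexivity.
    pose proof (vertical_displacement_le_edge_weight _ _ Hadj).
    pose proof (IH z' Hq).
    enough (IZR (Z.abs (snd z - snd v)) <=
            IZR (Z.abs (snd z - snd z')) + IZR (Z.abs (snd z' - snd v))) by lra.
    rewrite <- plus_IZR. apply IZR_le. lia.
Qed.

Lemma exists_vertical_path x y y' :
  exists p, path_from_to p (x, y) (x, y') /\ semi_directed p /\
    passage_time w p = IZR (Z.abs (y - y')).
Proof.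
  remember (Z.abs_nat (y - y')) as n eqn:Hn. revert y Hn.
  induction n as [|n IH]; intros y Hn.
  - assert (y = y') as -> by lia.
    exists [(x, y')]. rewrite Z.sub_diag.
    repeat split; easy.
  - set (y1 := if Z_lt_dec y y' then (y + 1)%Z else (y - 1)%Z).
    assert (Hy1 : Z.abs (y - y1) = 1%Z /\ Z.abs (y - y') = (1 + Z.abs (y1 - y'))%Z)
      by (unfold y1; destruct Z_lt_dec; lia).
    destruct (IH y1 ltac:(lia)) as (p & Hp & Hsd & HT).
    assert (Hhd : hd_error p = Some (x, y1)) by apply Hp.
    exists ((x, y) :: p). split; [|split].
    + apply (path_from_to_cons _ _ _ _ _ Hhd). split; [reflexivity|split; [|exact Hp]].
      unfold adjacent; cbn. lia.
    + apply (consecutive_cons _ _ _ _ Hhd). split; [|exact Hsd].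
      unfold sd_step; cbn. unfold y1; destruct Z_lt_dec; lia.
    + rewrite (passage_time_cons _ _ _ _ Hhd), edge_weight_vertical, HT.
      destruct Hy1 as [_ ->]. rewrite plus_IZR. reflexivity.
Qed.

Lemma exists_semi_directed_path_le p u v :
  path_from_to p u v -> (fst u <= fst v)%Z ->
  exists q, path_from_to q u v /\ semi_directed q /\ passage_time w q <= passage_time w p.
Proof.
  remember (Z.to_nat (fst v - fst u)) as n eqn:Hn. revert u p Hn.
  induction n as [|n IH]; intros [x y] p Hn Hp Hle; destruct v as [x' y']; cbn in Hn, Hle.
  - assert (x = x') as -> by lia.
    destruct (exists_vertical_path x' y y') as (q & Hq & Hsd & HT).
    exists q. split; [exact Hq|split; [exact Hsd|]].
    rewrite HT. exact (vertical_displacement_le_passage_time _ _ _ Hp).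
  - destruct (path_right_crossing x p _ _ Hp ltac:(cbn; lia)) as (A & a & B & ->).
    apply path_from_to_app_cons in Hp as [Hpre Hsuf].
    apply path_from_to_cons with (z' := ((x + 1)%Z, a)) in Hsuf as (_ & _ & Hsuf);
      [|reflexivity].
    destruct (IH ((x + 1)%Z, a) _ ltac:(cbn; lia) Hsuf ltac:(cbn; lia)) as (q & Hq & Hqsd & HqT).
    assert (Hhd : hd_error q = Some ((x + 1)%Z, a)) by apply Hq.
    destruct (exists_vertical_path x y a) as (V & HV & HVsd & HVT).
    destruct (path_from_to_snoc _ _ _ HV) as [V0 ->].
    exists (V0 ++ (x, a) :: q). split; [|split].
    + apply path_from_to_app_cons. split; [exact HV|].
      apply (path_from_to_cons _ _ _ _ _ Hhd). split; [reflexivity|split; [|exact Hq]].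
      unfold adjacent; cbn. lia.
    + apply consecutive_app_cons. split; [exact HVsd|].
      apply (consecutive_cons _ _ _ _ Hhd). split; [|exact Hqsd].
      unfold sd_step; cbn. lia.
    + rewrite (passage_time_app_cons w V0), (passage_time_app_cons w A), HVT.
      rewrite (passage_time_cons _ _ _ _ Hhd), (passage_time_cons _ _ ((x + 1)%Z, a)),
        edge_weight_right by reflexivity.
      pose proof (vertical_displacement_le_passage_time _ _ _ Hpre). cbn in *. lra.
Qed.

Lemma exists_self_avoiding_path_le p u v :
  path_from_to p u v -> semi_directed p ->
  exists q, path_from_to q u v /\ semi_directed q /\ NoDup q /\
    passage_time w q <= passage_time w p.
Proof.
  induction p as [p IH] using (well_founded_induction (well_founded_ltof _ (@length point))).
  intros Hp Hsd.
  destruct (NoDup_decidable point_eq_decidable p) as [Hnd|Hdup].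
  { exists p. split; [exact Hp|split; [exact Hsd|split; [exact Hnd|apply Rle_refl]]]. }
  destruct (not_NoDup point_eq_decidable Hdup) as (a & l1 & l2 & l3 & ->).
  destruct (IH (l1 ++ a :: l3)) as (q & Hq & Hqsd & Hqnd & HqT).
  - unfold ltof. rewrite !length_app. cbn. rewrite length_app. cbn. lia.
  - exact (path_from_to_erase_loop _ _ _ _ _ _ Hp).
  - exact (consecutive_erase_loop _ _ _ _ _ Hsd).
  - exists q. split; [exact Hq|split; [exact Hqsd|split; [exact Hqnd|]]].
    pose proof (passage_time_erase_loop l1 a l2 l3). lra.
Qed.

Lemma geodesic_of_passage_time_le gamma q u v :
  geodesic w gamma u v -> path_from_to q u v ->
  passage_time w q <= passage_time w gamma -> geodesic w q u v.
Proof.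
  intros [_ Hmin] Hq Hle. split; [exact Hq|].
  intros r Hr. specialize (Hmin r Hr). lra.
Qed.

End NonnegativeWeights.

Theorem proposition2p1 (w : hweights) (Hw : forall z, 0 <= w z)
  (x1 y1 x2 y2 : Z) (gamma : list point) :
  geodesic w gamma (x1, y1) (x2, y2) ->
  (x1 <= x2)%Z ->
  exists gamma' : list point,
    geodesic w gamma' (x1, y1) (x2, y2) /\
    semi_directed gamma' /\ non_self_intersecting gamma'.
Proof.
  intros Hgamma Hx.
  destruct (exists_semi_directed_path_le w Hw gamma _ _ (proj1 Hgamma) Hx)
    as (q & Hq & Hqsd & HqT).
  destruct (exists_self_avoiding_path_le w Hw q _ _ Hq Hqsd) as (r & Hr & Hrsd & Hrnd & HrT).
  exists r. split; [|split; assumption].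
  apply (geodesic_of_passage_time_le w gamma); [exact Hgamma|exact Hr|lra].
Qed.
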